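(* Let $\ell\le D/8$. There is a non-adaptive deterministic group testing algorithm that, when an integer $D$ with $d/4\le D\le 4d$ is known in advance to the algorithm, detects $\ell$ defective items among any defective set $I\subseteq[n]$ of size $d$ and makes $O(d\log(n/d))$ tests.
   Context: Group testing: items $X=[n]$, unknown defective set $I\subseteq X$ with $d=|I|$. A test $Q\subseteq X$ has answer $1$ if $Q\cap I\neq\emptyset$ and $0$ otherwise; the algorithm accesses $I$ only through tests. A non-adaptive algorithm fixes all its tests in advance (they do not depend on answers), then computes its output from the answers. ''Detects $\ell$ defective items'' means it outputs $L\subseteq I$ with $|L|=\ell$. Logarithms are base 2. *)

From mathcomp Require Import all_boot.
From Stdlib Require Import Reals.
Set Implicit Arguments. Unset Strict Implicit. Unset Printing Implicit Defensive.

Definition log2 (x : R) : R := (ln x / ln 2)%R.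

Definition test_answer (n : nat) (I Q : {set 'I_n}) : bool := Q :&: I != set0.

(* A deterministic non-adaptive group testing algorithm on items [n] = 'I_n:
   a number of tests, the tests fixed in advance, and a decoder computing the
   output from the vector of answers only. *)
Record nonadaptive_alg (n : nat) := NonAdaptive {
  ntests : nat;
  tests : 'I_ntests -> {set 'I_n};
  decode : ('I_ntests -> bool) -> {set 'I_n} }.

Definition run (n : nat) (A : nonadaptive_alg n) (I : {set 'I_n}) : {set 'I_n} :=
  @decode n A (fun j => test_answer I (@tests n A j)).

Definition detects (n : nat) (A : nonadaptive_alg n) (l d : nat) : Prop :=
  forall I : {set 'I_n}, #|I| = d -> run A I \subset I /\ #|run A I| = l.

(* Hash the items with K = 20 (k + 4) functions h_r : [n] -> [B], B = 2^21 * 5D, and test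
   every fibre {x | h_r x = b}.  Call the family low-collision if every set Z of at most 5D
   items satisfies sum_r |h_r(Z)| >= (K - K/20) |Z|.  For 2^(k+1) 5D > n a counting argument
   shows that such a family exists: the families failing at a fixed Z of size s number at
   most a fraction 2^-s / C(n, s) of all families, so a union bound over Z leaves one.
   The decoder keeps the candidates S, whose every hash value is hit by a positive test, and
   outputs l of the isolated candidates, those alone in their fibre for some r; these are
   defective.  Low collision on I together with D points of S \ I would be violated, so
   |S \ I| < D; a defective that is not isolated collides inside S for every r, and counting
   collisions gives at most |S| / 10 of them.  Hence at least D/8 defectives are isolated,
   and with k = floor(log2 (n / D)) the K B tests number O(d log (n / d)). *)

From mathcomp Require Import all_boot zify.
From Stdlib Require Import Reals Lra.
(* Reals rebinds [^] on nat to Nat.pow; this restores ssrnat's [expn]. *)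
Import ssrnat.
Set Implicit Arguments. Unset Strict Implicit. Unset Printing Implicit Defensive.

Lemma INR_expn m e : INR (m ^ e) = (INR m ^ e)%R.
Proof. by elim: e => [|e IH]; rewrite ?expn0 // expnS mult_INR IH. Qed.

Lemma exp_mul_INR x t : exp (INR t * x) = (exp x ^ t)%R.
Proof.
elim: t => [|t IH]; first by rewrite Rmult_0_l exp_0.
by rewrite S_INR Rmult_plus_distr_r Rmult_1_l exp_plus IH /= Rmult_comm.
Qed.

Lemma one_add_inv_pow_le_exp1 t : 0 < t -> ((1 + / INR t) ^ t <= exp 1)%R.
Proof.
move=> t_gt0; have tR : (0 < INR t)%R by apply/lt_0_INR/ltP.
rewrite -[X in (_ <= exp X)%R](Rinv_r (INR t)) ?exp_mul_INR; last lra.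
apply: pow_incr; split; last exact: exp_ineq1_le.
by have := Rinv_0_lt_compat _ tR; lra.
Qed.

Lemma expS_le_3_expn t : t.+1 ^ t <= 3 * t ^ t.
Proof.
case: (posnP t) => [->|t_gt0] //.
have tR : (0 < INR t)%R by apply/lt_0_INR/ltP.
apply/leP/INR_le; rewrite mult_INR !INR_expn.
have -> : INR t.+1 = (INR t * (1 + / INR t))%R by rewrite S_INR; field; lra.
rewrite Rpow_mult_distr.
have := one_add_inv_pow_le_exp1 t_gt0; have := exp_le_3; have := pow_le _ t (Rlt_le _ _ tR).
rewrite [INR 3]/=; nra.
Qed.

Lemma expn_self_le_fact s : s ^ s <= 3 ^ s * s`!.
Proof.
elim: s => [|s IH] //; rewrite expnS factS.
apply: leq_trans (leq_mul (leqnn s.+1) (expS_le_3_expn s)) _.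
by rewrite mulnCA expnS -mulnA leq_mul2l mulnCA leq_mul2l IH orbT.
Qed.

Lemma leq_expn2r m n e : m <= n -> m ^ e <= n ^ e.
Proof. by case: e => [|e] mn; rewrite ?expn0 ?leq_exp2r. Qed.

Lemma leq_mul_expn_lower p q a b e c :
  p * b ^ e <= a ^ e * q -> c <= e -> a <= b -> 0 < b -> p * b ^ c <= a ^ c * q.
Proof.
move=> le_e ce ab b_gt0; move: le_e; rewrite -(subnKC ce) !expnD => le_e.
have lift : a ^ c * a ^ (e - c) * q <= a ^ c * q * b ^ (e - c).
  by rewrite mulnAC leq_mul2l leq_expn2r ?orbT.
by have := leq_trans le_e lift; rewrite mulnA leq_pmul2r // expn_gt0 b_gt0.
Qed.

Lemma ffact_le_expn n s : n ^_ s <= n ^ s.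
Proof.
elim: s n => [|s IH] n //; rewrite ffactnS expnS leq_mul2l.
by rewrite (leq_trans (IH _)) ?leq_expn2r ?leq_pred ?orbT.
Qed.

Lemma bin_mul_expn_le n s : 'C(n, s) * s ^ s <= 3 ^ s * n ^ s.
Proof.
apply: leq_trans (leq_mul (leqnn _) (expn_self_le_fact s)) _.
by rewrite mulnCA bin_ffact leq_mul2l ffact_le_expn orbT.
Qed.

(* [C(n, s) s^s <= (3 n)^s <= (2^(k+3) M)^s] trades the binomial for the factor [M^s] on the
   right; all the powers of 2 then fit into [2^(21 c)]. *)
Lemma union_weight_le n M k s : 0 < s <= M -> n < 2 ^ k.+1 * M ->
  2 ^ s * 'C(n, s) * 2 ^ (s * (20 * (k + 4))) * s ^ ((k + 4) * s + 1)
  <= (2 ^ 21 * M) ^ ((k + 4) * s + 1).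
Proof.
move=> /andP [s_gt0 sM] nM; set c := (k + 4) * s + 1.
have sc : s <= c by rewrite /c; nia.
have binom : 'C(n, s) * s ^ s <= 2 ^ ((k + 3) * s) * M ^ s.
  apply: leq_trans (bin_mul_expn_le n s) _.
  rewrite mulnC expnM -!expnMn leq_expn2r // addnS expnSr.
  by move: nM; rewrite addn2 !expnS; set p := 2 ^ k; nia.
have rest : s ^ (c - s) <= M ^ (c - s) by apply: leq_expn2r.
have pow2 : 2 ^ s * 2 ^ (s * (20 * (k + 4))) * 2 ^ ((k + 3) * s) <= 2 ^ (21 * c).
  by rewrite -!expnD leq_exp2l // /c; nia.
have splitc m : m ^ c = m ^ s * m ^ (c - s) by rewrite -expnD subnKC.
rewrite expnMn -expnM !splitc.
move: binom rest pow2; set b := 'C(n, s); set x := 2 ^ s; set y := 2 ^ (s * _).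
set z := 2 ^ (_ * s); set w := 2 ^ (21 * c); set s1 := s ^ s; set s2 := s ^ (c - s).
set m1 := M ^ s; set m2 := M ^ (c - s) => binom rest pow2.
apply: (@leq_trans (x * y * (z * m1) * m2)).
  have -> : x * b * y * (s1 * s2) = x * y * (b * s1) * s2 by lia.
  by rewrite leq_mul // leq_mul.
have -> : x * y * (z * m1) * m2 = x * y * z * (m1 * m2) by lia.
by rewrite leq_mul.
Qed.

Lemma ln_le_compat x y : (0 < x)%R -> (x <= y)%R -> (ln x <= ln y)%R.
Proof. by move=> x_gt0 [xy|<-]; [apply/Rlt_le/ln_increasing | apply: Rle_refl]. Qed.

Lemma ln2_gt0 : (0 < ln 2)%R.
Proof. by have := ln_lt_2; lra. Qed.

Lemma log2_div_ge0 n d : 0 < d -> d <= n -> (0 <= log2 (INR n / INR d))%R.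
Proof.
move=> d_gt0 dn; have dR : (0 < INR d)%R by apply/lt_0_INR/ltP.
have ndR : (1 <= INR n / INR d)%R.
  apply: (Rmult_le_reg_r (INR d)) => //.
  by rewrite Rmult_1_l /Rdiv Rmult_assoc Rinv_l ?Rmult_1_r; [apply/le_INR/leP | lra].
apply: Rmult_le_pos; first by rewrite -ln_1; apply: ln_le_compat; lra.
exact/Rlt_le/Rinv_0_lt_compat/ln2_gt0.
Qed.

Lemma log2_div_lower k n d : 0 < d -> 2 ^ k * d <= 4 * n ->
  (INR k <= log2 (INR n / INR d) + 2)%R.
Proof.
move=> d_gt0 kdn; have dR : (0 < INR d)%R by apply/lt_0_INR/ltP.
have nR : (0 < INR n)%R.
  by apply/lt_0_INR/ltP; move: kdn; rewrite -(prednK (expn_gt0 2 k)); nia.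
have l2 := ln2_gt0; have p2 : (0 < 2 ^ k)%R by apply: pow_lt; lra.
move/leP/le_INR: kdn; rewrite !mult_INR INR_expn.
have -> : INR 2 = 2%R by rewrite /=; lra.
have -> : INR 4 = (2 * 2)%R by rewrite /=; lra.
move=> kdnR; have := ln_le_compat (Rmult_lt_0_compat _ _ p2 dR) kdnR.
rewrite !ln_mult ?ln_pow //; try lra.
rewrite /log2 /Rdiv ln_mult ?ln_Rinv //; last exact: Rinv_0_lt_compat.
move=> ln_le; apply: (Rmult_le_reg_r (ln 2)) => //.
rewrite Rmult_plus_distr_r Rmult_assoc Rinv_l; lra.
Qed.

Lemma INR_le_log2_bound c k n d : 0 < d -> d <= n -> 2 ^ k * d <= 4 * n ->
  (INR (c * (k + 4) * d) <= 6 * INR c * INR d * (log2 (INR n / INR d) + 1))%R.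
Proof.
move=> d_gt0 dn kdn; have L0 := log2_div_ge0 d_gt0 dn; have Lk := log2_div_lower d_gt0 kdn.
have cd : (0 <= INR c * INR d)%R by apply: Rmult_le_pos; apply: pos_INR.
rewrite !mult_INR plus_INR [INR 4]/=; nra.
Qed.

Lemma card_bigcup_le (I T : finType) (P : pred I) (F : I -> {set T}) :
  #|\bigcup_(i | P i) F i| <= \sum_(i | P i) #|F i|.
Proof.
elim/big_rec2: _ => [|i n U _ leUn]; first by rewrite cards0.
by rewrite (leq_trans (leq_card_setU _ _).1) ?leq_add2l.
Qed.

Lemma sum_lt_geometric (X : nat -> nat) a m : 0 < a -> X 0 = 0 ->
  (forall s, 0 < s -> X s * 2 ^ s <= a) -> \sum_(s < m) X s < a.
Proof.
move=> a_gt0 X0 Xs.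
have scaled j : (\sum_(s < j.+1) X s) * 2 ^ j <= a * (2 ^ j - 1).
  elim: j => [|j IH]; first by rewrite big_ord1 X0.
  rewrite big_ord_recr /=; move: (Xs j.+1 isT) IH (expn_gt0 2 j); rewrite !expnS.
  set S := \sum_(_ < _) _; set e := 2 ^ j; nia.
case: m => [|m]; first by rewrite big_ord0.
rewrite -(ltn_pmul2r (expn_gt0 2 m)); apply: leq_ltn_trans (scaled m) _.
by rewrite ltn_pmul2l // ltn_subrL expn_gt0.
Qed.

Lemma sum_subsets_lt (T : finType) (F : {set T} -> nat) a : 0 < a -> F set0 = 0 ->
  (forall Z : {set T}, 0 < #|Z| -> F Z * 2 ^ #|Z| * 'C(#|T|, #|Z|) <= a) ->
  \sum_(Z : {set T}) F Z < a.
Proof.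
move=> a_gt0 F0 FZ; pose of_size s := [set Z : {set T} | #|Z| == s].
rewrite (partition_big (fun Z : {set T} => inord #|Z| : 'I_#|T|.+1) xpredT) //=.
rewrite (eq_bigr (fun s : 'I_#|T|.+1 => \sum_(Z in of_size s) F Z)) => [|s _]; last first.
  by apply: eq_bigl => Z; rewrite inE -val_eqE /= inordK ?ltnS ?max_card.
apply: (sum_lt_geometric (X := fun s => \sum_(Z in of_size s) F Z)) => // [|s s_gt0].
  by rewrite (big_pred1 set0) // => Z; rewrite inE cards_eq0.
case: (posnP 'C(#|T|, s)) => [C0|C_gt0].
  rewrite big_pred0 // => Z; rewrite inE; apply/negP => /eqP Zs.
  by move/eqP: C0; rewrite -Zs -leqn0 leqNgt bin_gt0 max_card.
rewrite -(leq_pmul2r C_gt0) !big_distrl /=.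
apply: leq_trans (_ : \sum_(Z in of_size s) a <= _).
  by apply: leq_sum => Z; rewrite inE => /eqP Zs; rewrite -Zs FZ ?Zs.
by rewrite sum_nat_const card_draws mulnC.
Qed.

Lemma card_family_prod (T rT : finType) (F : T -> pred rT) :
  #|(finfun.family F : pred {ffun T -> rT})| = \prod_(x : T) #|F x|.
Proof. by rewrite card_family foldrE big_image. Qed.

Section CoveredFunctions.
Variables (T U : finType) (u0 : U).

Definition covered_by (Z A : {set T}) : {set {ffun T -> U}} :=
  [set f : {ffun T -> U} | f @: Z \subset f @: A].

(* Such an f is [f1 \o g], where g sends each x of Z :\: A to some a in A with f a = f x
   and fixes the other points, and f1 agrees with f off Z :\: A and is u0 on it. *)
Lemma card_covered_by (Z A : {set T}) : A \subset Z ->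
  #|covered_by Z A| <= #|A| ^ #|Z :\: A| * #|U| ^ (#|T| - #|Z :\: A|).
Proof.
move=> AZ; set X := Z :\: A.
pose D1 := [set f1 : {ffun T -> U} | f1 \in pffun_on u0 (~: X) predT].
pose D2 := [set g : {ffun T -> T} |
  g \in finfun.family (fun x => if x \in X then A else [set x])].
pose comp (p : {ffun T -> U} * {ffun T -> T}) := [ffun x => p.1 (p.2 x)].
have cover : covered_by Z A \subset comp @: setX D1 D2.
  apply/subsetP => f; rewrite inE => /subsetP fZA.
  have witness x : x \in X -> exists2 a, a \in A & f a == f x.
    rewrite inE => /andP [_ xZ]; case/imsetP: (fZA _ (imset_f f xZ)) => a aA fxa.
    by exists a; rewrite // fxa.
  pose g := [ffun x => if x \in X then odflt x [pick a in A | f a == f x] else x].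
  have gX x : x \in X -> g x \in A /\ f (g x) = f x.
    move=> xX; rewrite ffunE xX; case: pickP => [a /andP [aA /eqP] //|none].
    by have [a aA fa] := witness x xX; move: (none a); rewrite aA fa.
  apply/imsetP; exists ([ffun x => if x \in X then u0 else f x], g).
    rewrite in_setX !in_set; apply/andP; split.
      apply/pffun_onP; split=> [|y _] //; apply/subsetP => x.
      by case xX: (x \in X); rewrite inE ffunE xX ?eqxx // in_setC xX.
    apply/familyP => x; case: ifP => xX; first by have [] := gX x xX.
    by rewrite ffunE xX /= inE.
  apply/ffunP => x; rewrite ffunE /= ffunE; case xX: (x \in X).
    have [gA fg] := gX x xX; have gNX : g x \notin X by rewrite inE gA.
    by rewrite (negbTE gNX) fg.
  by rewrite ffunE xX xX.
apply: leq_trans (subset_leq_card cover) _; apply: leq_trans (leq_imset_card _ _) _.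
have cardD1 : #|D1| = #|U| ^ (#|T| - #|X|).
  by rewrite cardsE card_pffun_on -(cardsC X) addKn.
have cardD2 : #|D2| = #|A| ^ #|X|.
  rewrite cardsE card_family_prod -prod_nat_const [RHS]big_mkcond /=.
  by apply: eq_bigr => x _; case: ifP; rewrite ?cards1.
by rewrite cardsX cardD1 cardD2 mulnC.
Qed.

Definition fiber_reps (f : T -> U) (Z : {set T}) : {set T} :=
  [set x in Z | [pick y in Z | f y == f x] == Some x].

Lemma fiber_reps_sub (f : T -> U) (Z : {set T}) : fiber_reps f Z \subset Z.
Proof. by apply/subsetP => x; rewrite inE => /andP []. Qed.

Lemma fiber_reps_cover (f : T -> U) (Z : {set T}) : f @: Z \subset f @: fiber_reps f Z.
Proof.
apply/subsetP => _ /imsetP [z zZ ->].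
have [y [yZ fyz pickE]] :
    exists y, [/\ y \in Z, f y = f z & [pick y in Z | f y == f z] = Some y].
  by case: pickP => [y /andP [yZ /eqP fyz] | /(_ z)]; [exists y | rewrite /= zZ eqxx].
by rewrite -fyz; apply: imset_f; rewrite inE yZ fyz pickE eqxx.
Qed.

Lemma card_fiber_reps (f : T -> U) (Z : {set T}) : #|fiber_reps f Z| <= #|f @: Z|.
Proof.
have f_inj : {in fiber_reps f Z &, injective f}.
  move=> x y; rewrite !inE => /andP [_ /eqP pickx] /andP [_ /eqP picky] fxy.
  by move: pickx; rewrite fxy picky => [[]].
by rewrite -(card_in_imset f_inj) subset_leq_card ?imsetS ?fiber_reps_sub.
Qed.

End CoveredFunctions.

Definition low_collision (T U : finType) K (h : {ffun 'I_K -> {ffun T -> U}}) (Kp m : nat) :=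
  forall Z : {set T}, #|Z| <= m -> K * #|Z| <= \sum_(r < K) #|h r @: Z| + Kp * #|Z|.

Section HeavyFamilies.
Variables (T U : finType) (u0 : U) (K Kp : nat).
Local Notation hash_family := {ffun 'I_K -> {ffun T -> U}}.

Definition heavy (Z : {set T}) : {set hash_family} :=
  [set h : hash_family | \sum_(r < K) #|h r @: Z| + Kp * #|Z| < K * #|Z|].

Definition small_subtuples (Z : {set T}) : {set {ffun 'I_K -> {set T}}} :=
  [set A : {ffun 'I_K -> {set T}} |
     [forall r, A r \subset Z] && (\sum_(r < K) #|A r| + Kp * #|Z| < K * #|Z|)].

Definition covered_families (Z : {set T}) (A : {ffun 'I_K -> {set T}}) : {set hash_family} :=
  [set h : hash_family | h \in finfun.family (fun r => covered_by U Z (A r))].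

Lemma heavy_sub_covered (Z : {set T}) :
  heavy Z \subset \bigcup_(A in small_subtuples Z) covered_families Z A.
Proof.
apply/subsetP => h; rewrite inE => hZ.
apply/bigcupP; exists [ffun r => fiber_reps (h r) Z].
  rewrite inE; apply/andP; split; first by apply/forallP => r; rewrite ffunE fiber_reps_sub.
  apply: leq_ltn_trans hZ; rewrite leq_add2r; apply: leq_sum => r _.
  by rewrite ffunE card_fiber_reps.
by rewrite inE; apply/familyP => r; rewrite ffunE inE fiber_reps_cover.
Qed.

Lemma card_small_subtuples (Z : {set T}) : #|small_subtuples Z| <= 2 ^ (#|Z| * K).
Proof.
have sub : small_subtuples Z \subset [set A | A \in ffun_on (powerset Z)].
  apply/subsetP => A; rewrite !inE => /andP [/forallP AZ _].
  by apply/ffun_onP => r; rewrite powersetE.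
apply: leq_trans (subset_leq_card sub) _.
by rewrite cardsE card_ffun_on card_powerset card_ord expnM.
Qed.

Lemma card_hash_family : #|{: hash_family}| = (#|U| ^ #|T|) ^ K.
Proof. by rewrite !card_ffun card_ord. Qed.

Lemma card_covered_families (Z : {set T}) A : A \in small_subtuples Z -> #|Z| <= #|U| ->
  #|covered_families Z A| * #|U| ^ (Kp * #|Z| + 1)
  <= #|Z| ^ (Kp * #|Z| + 1) * #|{: hash_family}|.
Proof.
rewrite inE => /andP [/forallP AZ small] ZU; set s := #|Z| in small ZU *.
have per r :
    #|covered_by U Z (A r)| * #|U| ^ #|Z :\: A r| <= s ^ #|Z :\: A r| * #|U| ^ #|T|.
  apply: leq_trans (leq_mul (card_covered_by u0 (AZ r)) (leqnn _)) _.
  rewrite -mulnA -expnD subnK ?max_card // leq_mul2r leq_expn2r ?orbT //.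
  exact: subset_leq_card.
have prod_le : \prod_(r < K) (#|covered_by U Z (A r)| * #|U| ^ #|Z :\: A r|)
    <= \prod_(r < K) (s ^ #|Z :\: A r| * #|U| ^ #|T|) by apply: leq_prod => r _.
move: prod_le; rewrite !big_split /= -!expn_sum sum_nat_const card_ord [K * _]mulnC expnM.
rewrite -card_hash_family cardsE card_family_prod => prod_le.
apply: leq_mul_expn_lower prod_le _ ZU _; last by apply/card_gt0P; exists u0.
have split_r r : #|Z :\: A r| + #|A r| = s.
  by rewrite cardsDS ?AZ // subnK // subset_leq_card.
have : \sum_(r < K) #|Z :\: A r| + \sum_(r < K) #|A r| = K * s.
  by rewrite -big_split /= (eq_bigr _ (fun r _ => split_r r)) sum_nat_const card_ord.
by move: small; set x := \sum_(r < K) _; set y := \sum_(r < K) _; lia.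
Qed.

Lemma card_heavy (Z : {set T}) : #|Z| <= #|U| ->
  #|heavy Z| * #|U| ^ (Kp * #|Z| + 1)
  <= 2 ^ (#|Z| * K) * #|Z| ^ (Kp * #|Z| + 1) * #|{: hash_family}|.
Proof.
move=> ZU; apply: leq_trans (leq_mul (subset_leq_card (heavy_sub_covered Z)) (leqnn _)) _.
apply: leq_trans (leq_mul (card_bigcup_le _ _) (leqnn _)) _.
rewrite big_distrl /=; apply: leq_trans
  (_ : _ <= \sum_(A in small_subtuples Z) (#|Z| ^ (Kp * #|Z| + 1) * #|{: hash_family}|)) _.
  by apply: leq_sum => A HA; apply: card_covered_families.
by rewrite sum_nat_const -mulnA leq_mul2r card_small_subtuples orbT.
Qed.

End HeavyFamilies.

Lemma card_heavy_weight n M k (Z : {set 'I_n}) : 0 < #|Z| <= M -> n < 2 ^ k.+1 * M ->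
  #|heavy 'I_(2 ^ 21 * M) (20 * (k + 4)) (k + 4) Z| * 2 ^ #|Z| * 'C(n, #|Z|)
  <= #|{: {ffun 'I_(20 * (k + 4)) -> {ffun 'I_n -> 'I_(2 ^ 21 * M)}}}|.
Proof.
move=> /andP [Z_gt0 ZM] nM; set K := 20 * (k + 4); set B := 2 ^ 21 * M.
have B_gt0 : 0 < B by rewrite muln_gt0 expn_gt0 (leq_trans Z_gt0 ZM).
have ZB : #|Z| <= B by rewrite (leq_trans ZM) // leq_pmull ?expn_gt0.
have := @card_heavy _ _ (Ordinal B_gt0) K (k + 4) Z; rewrite card_ord => /(_ ZB).
have := @union_weight_le n M k #|Z|; rewrite Z_gt0 ZM => /(_ isT nM).
set c := (k + 4) * #|Z| + 1; rewrite -/K -/B => weight_le heavy_le.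
rewrite -(@leq_pmul2r (B ^ c)) ?expn_gt0 ?B_gt0 //.
move: weight_le heavy_le; set H := #|heavy _ _ _ _|; set all := #|{: _}|.
set x := 2 ^ #|Z|; set C := 'C(n, _); set y := 2 ^ (_ * K); set w := #|Z| ^ c.
move=> weight_le heavy_le; apply: (@leq_trans (x * C * (y * w * all))).
  rewrite (_ : H * x * C * B ^ c = x * C * (H * B ^ c)); last by lia.
  by rewrite leq_mul2l heavy_le orbT.
rewrite (_ : x * C * (y * w * all) = x * C * y * w * all); last by lia.
by rewrite [all * _]mulnC leq_mul2r weight_le orbT.
Qed.

Lemma exists_low_collision n M k : 0 < M -> n < 2 ^ k.+1 * M ->
  exists h : {ffun 'I_(20 * (k + 4)) -> {ffun 'I_n -> 'I_(2 ^ 21 * M)}},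
    low_collision h (k + 4) M.
Proof.
move=> M_gt0 nM; set K := 20 * (k + 4); set B := 2 ^ 21 * M.
have B_gt0 : 0 < B by rewrite muln_gt0 expn_gt0.
pose all := #|{: {ffun 'I_K -> {ffun 'I_n -> 'I_B}}}|.
have all_gt0 : 0 < all by apply/card_gt0P; exists [ffun=> [ffun=> Ordinal B_gt0]].
pose Bad := \bigcup_(Z : {set 'I_n} | #|Z| <= M) heavy 'I_B K (k + 4) Z.
have Bad_lt : #|Bad| < all.
  apply: leq_ltn_trans (card_bigcup_le _ _) _; rewrite big_mkcond.
  apply: sum_subsets_lt => // [|Z Z_gt0]; rewrite ?card_ord; case: ifP => // ZM.
    by apply/eqP; rewrite cards_eq0; apply/eqP/setP => h; rewrite !inE cards0 !muln0 ltn0.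
  by apply: card_heavy_weight; rewrite ?Z_gt0.
have /card_gt0P [h] : 0 < #|~: Bad| by rewrite cardsCs setCK subn_gt0.
rewrite inE => hBad; exists h => Z ZM; rewrite leqNgt.
by apply: contra hBad => hZ; apply/bigcupP; exists Z; rewrite ?inE.
Qed.

Definition colliding (T U : finType) (f : T -> U) (S : {set T}) : {set T} :=
  [set z in S | [exists y in S, (y != z) && (f y == f z)]].

Lemma card_colliding (T U : finType) (f : T -> U) (S : {set T}) :
  #|colliding f S| + 2 * #|f @: S| <= 2 * #|S|.
Proof.
set N := colliding f S.
have NS : N \subset S by apply/subsetP => z; rewrite inE => /andP [].
have split_img : #|f @: S| <= #|f @: N| + #|f @: (S :\: N)|.
  by rewrite -{1}(setID S N) (setIidPr NS) imsetU; apply: (leq_card_setU _ _).1.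
have img_rest : #|f @: (S :\: N)| <= #|S| - #|N| by rewrite -cardsDS // leq_imset_card.
have img_N : 2 * #|f @: N| <= #|N|.
  rewrite -[#|N|]sum1_card (partition_big_imset f) /= mulnC -sum_nat_const.
  apply: leq_sum => _ /imsetP [z zN ->]; rewrite sum1_card.
  have := zN; rewrite inE => /andP [zS /existsP [y /and3P [yS yz /eqP fyz]]].
  have yN : y \in N by rewrite inE yS; apply/existsP; exists z; rewrite zS eq_sym yz fyz /=.
  apply: leq_trans (_ : #|[set y; z]| <= _); first by rewrite cards2 yz.
  by apply/subset_leq_card/subsetP => x /set2P [] ->; rewrite unfold_in /= ?yN ?zN ?fyz eqxx.
have := subset_leq_card NS; lia.
Qed.

Definition take_set (T : finType) (l : nat) (A : {set T}) : {set T} :=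
  [set x in take l (enum A)].

Lemma take_setP (T : finType) l (A : {set T}) : l <= #|A| ->
  take_set l A \subset A /\ #|take_set l A| = l.
Proof.
move=> lA; split; first by apply/subsetP => x; rewrite inE => /mem_take; rewrite mem_enum.
by rewrite cardsE (card_uniqP _) ?take_uniq ?enum_uniq // size_takel // -cardE.
Qed.

Section HashDecoder.
Variables (n K B : nat) (h : {ffun 'I_K -> {ffun 'I_n -> 'I_B}}).

Definition hash_test (p : 'I_K * 'I_B) : {set 'I_n} := [set x | h p.1 x == p.2].

Definition positives (I : {set 'I_n}) : {set 'I_K * 'I_B} :=
  [set p | test_answer I (hash_test p)].

Definition candidates (pos : {set 'I_K * 'I_B}) : {set 'I_n} :=
  [set x | [forall r, (r, h r x) \in pos]].

Definition isolated (pos : {set 'I_K * 'I_B}) : {set 'I_n} :=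
  [set x in candidates pos |
     [exists r, [forall y in candidates pos, (h r y == h r x) ==> (y == x)]]].

Definition hash_alg (l : nat) : nonadaptive_alg n :=
  @NonAdaptive n #|{: 'I_K * 'I_B}| (fun j => hash_test (enum_val j))
    (fun ans => take_set l (isolated [set p | ans (enum_rank p)])).

Lemma run_hash_alg l I : run (hash_alg l) I = take_set l (isolated (positives I)).
Proof.
rewrite /run /=; congr (take_set _ (isolated _)).
by apply/setP => p; rewrite !inE enum_rankK.
Qed.

Lemma mem_positives I r b : ((r, b) \in positives I) = (b \in h r @: I).
Proof.
rewrite inE /test_answer; apply/set0Pn/imsetP => [[x] | [x xI ->]].
  by rewrite !inE /= => /andP [/eqP <- xI]; exists x.
by exists x; rewrite !inE eqxx.
Qed.

Variable I : {set 'I_n}.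
Local Notation S := (candidates (positives I)).

Lemma defectives_sub_candidates : I \subset S.
Proof.
by apply/subsetP => x xI; rewrite inE; apply/forallP => r; rewrite mem_positives imset_f.
Qed.

Lemma isolated_sub_defectives : isolated (positives I) \subset I.
Proof.
apply/subsetP => x; rewrite inE => /andP [xS /existsP [r /forall_inP alone]].
move: xS; rewrite inE => /forallP /(_ r); rewrite mem_positives => /imsetP [y yI hxy].
have := alone y (subsetP defectives_sub_candidates y yI).
by rewrite hxy eqxx => /eqP <-.
Qed.

Lemma card_false_candidates Kp D : K = 20 * Kp -> 0 < Kp -> 0 < D -> #|I| <= 4 * D ->
  low_collision h Kp (5 * D) -> #|S :\: I| < D.
Proof.
move=> KE Kp_gt0 D_gt0 ID low; rewrite ltnNge; apply/negP => DF.
have [Y [YF cY]] : exists Y : {set 'I_n}, Y \subset S :\: I /\ #|Y| = D.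
  by exists (take_set D (S :\: I)); apply: take_setP DF.
have IY : I :&: Y = set0.
  apply/setP => x; rewrite !inE; apply/negbTE; rewrite negb_and orbC.
  by case: (boolP (x \in Y)) => // /(subsetP YF); rewrite inE => /andP [].
have cZ : #|I :|: Y| = #|I| + D by rewrite -cY -cardsUI IY cards0 addn0.
have img r : #|h r @: (I :|: Y)| <= #|I|.
  apply: leq_trans (leq_imset_card (h r) I); apply/subset_leq_card/subsetP => u /imsetP [z].
  rewrite inE => /orP [zI | /(subsetP YF) zF] ->; first exact: imset_f.
  by move: zF; rewrite inE => /andP [_]; rewrite inE => /forallP /(_ r); rewrite mem_positives.
have sum_img : \sum_(r < K) #|h r @: (I :|: Y)| <= K * #|I|.
  apply: leq_trans (_ : _ <= \sum_(r < K) #|I|) _; first exact: leq_sum.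
  by rewrite sum_nat_const card_ord.
have Z_le : #|I :|: Y| <= 5 * D by rewrite cZ; lia.
move: sum_img (low _ Z_le); rewrite cZ; set x := \sum_(r < K) _; clearbody x; rewrite KE; nia.
Qed.

Lemma card_non_isolated Kp m : K = 20 * Kp -> 0 < Kp -> #|S| <= m -> low_collision h Kp m ->
  10 * #|I :\: isolated (positives I)| <= #|S|.
Proof.
move=> KE Kp_gt0 Sm low; set U := I :\: _.
have U_coll r : U \subset colliding (h r) S.
  apply/subsetP => x; rewrite inE => /andP [xNiso xI].
  have xS := subsetP defectives_sub_candidates x xI.
  move: xNiso; rewrite inE xS negb_exists => /forallP /(_ r); rewrite negb_forall.
  case/existsP => y; rewrite !negb_imply => /and3P [yS hyx yx].
  by rewrite inE xS; apply/existsP; exists y; rewrite yS yx hyx.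
have sum_U : K * #|U| <= \sum_(r < K) #|colliding (h r) S|.
  apply: leq_trans (_ : _ <= \sum_(r < K) #|U|) _; first by rewrite sum_nat_const card_ord.
  by apply: leq_sum => r _; rewrite subset_leq_card.
have sum_coll : \sum_(r < K) #|colliding (h r) S| + 2 * \sum_(r < K) #|h r @: S|
    <= K * (2 * #|S|).
  rewrite big_distrr -big_split /=; apply: leq_trans (_ : _ <= \sum_(r < K) 2 * #|S|) _.
    by apply: leq_sum => r _; apply: card_colliding.
  by rewrite sum_nat_const card_ord.
suff : Kp * (10 * #|U|) <= Kp * #|S| by rewrite leq_pmul2l.
move: sum_U sum_coll (low S Sm); set c := \sum_(r < K) _; set i := \sum_(r < K) _.
set s := #|S|; set u := #|U|; clearbody c i s u; rewrite KE; lia.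
Qed.

Lemma hash_alg_detects Kp D l : K = 20 * Kp -> 0 < Kp -> 0 < D ->
  low_collision h Kp (5 * D) -> 8 * l <= D -> D <= 4 * #|I| -> #|I| <= 4 * D ->
  run (hash_alg l) I \subset I /\ #|run (hash_alg l) I| = l.
Proof.
move=> KE Kp_gt0 D_gt0 low lD DI ID.
have false_cand := card_false_candidates KE Kp_gt0 D_gt0 ID low.
have cardS : #|S| = #|I| + #|S :\: I|.
  by rewrite cardsDS ?defectives_sub_candidates // subnKC ?subset_leq_card
    ?defectives_sub_candidates.
have S_le : #|S| <= 5 * D by rewrite cardS; lia.
have non_iso := card_non_isolated KE Kp_gt0 S_le low.
rewrite cardsDS ?isolated_sub_defectives // cardS in non_iso.
have l_iso : l <= #|isolated (positives I)|.
  by move: non_iso; have := subset_leq_card isolated_sub_defectives; lia.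
rewrite run_hash_alg; have [take_sub ->] := take_setP l_iso.
by split=> //; apply: subset_trans take_sub isolated_sub_defectives.
Qed.

End HashDecoder.

Theorem theorem8 :
  exists C : R, (0 < C)%R /\
  forall n D l : nat, 8 * l <= D ->
  exists A : nonadaptive_alg n,
    forall d : nat, d <= 4 * D -> D <= 4 * d -> d <= n ->
      detects A l d /\
      (INR (@ntests n A) <= C * INR d * (log2 (INR n / INR d) + 1))%R.
Proof.
exists (6 * INR (400 * 2 ^ 21))%R; split.
  by apply: Rmult_lt_0_compat; [lra | apply/lt_0_INR/ltP; rewrite muln_gt0 expn_gt0].
move=> n D l lD; case: (posnP D) => [D0 | D_gt0].
  exists (@NonAdaptive n 0 (fun _ => set0) (fun _ => set0)) => d dD _ _.
  have d0 : d = 0 by lia.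
  split; first by move=> I _; rewrite /run /= sub0set cards0; lia.
  by rewrite d0 [INR (ntests _)]/= Rmult_0_r Rmult_0_l; apply: Rle_refl.
set k := trunc_log 2 (n %/ D).
have nD : n < 2 ^ k.+1 * (5 * D).
  by have := trunc_log_ltn (n %/ D) (isT : 1 < 2); rewrite -/k ltn_divLR //; nia.
have M_gt0 : 0 < 5 * D by rewrite muln_gt0 D_gt0.
have [h low] := exists_low_collision M_gt0 nD.
exists (hash_alg h l) => d dD Dd dn; split.
  by move=> I cardI; apply: (hash_alg_detects (Kp := k + 4) (D := D)); rewrite ?cardI ?addn4.
have d_gt0 : 0 < d by lia.
have kd : 2 ^ k * d <= 4 * n.
  case: (posnP (n %/ D)) => [nD0 | nD_gt0]; first by rewrite /k nD0 trunc_log0; lia.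
  by have := trunc_logP (isT : 1 < 2) nD_gt0; rewrite -/k leq_divRL //; nia.
apply: Rle_trans (INR_le_log2_bound (400 * 2 ^ 21) d_gt0 dn kd).
by apply/le_INR/leP; rewrite /= card_prod !card_ord; set p := 2 ^ 21; nia.
Qed.
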